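(* With the notation of the context, for every $v=\sum_{i,j}x_{ij}(i,j)\in V$ we have $$\kappa_A(v)\ \le\ \frac1N\sum_{i\ge j}x_{ij}+\Big(1-\frac1N\Big)\sum_{i<j}x_{ij},$$ and the same inequality holds with $\kappa_B$ in place of $\kappa_A$.
   Context: Let $A,B$ be groups, $L\ge1$, $a_1,\dots,a_L\in A\setminus\{1\}$, $b_1,\dots,b_L\in B\setminus\{1\}$. Let $N\in\{2,3,\dots\}\cup\{\infty\}$ be the minimum of the orders of $a_1,\dots,a_L,b_1,\dots,b_L$ (convention $1/\infty=0$). Let $W$ be the real vector space with basis the formal symbols $(i,j)$, $1\le i,j\le L$. Let $V=\{\sum_{i,j}x_{ij}(i,j): x_{ij}\ge0,\ \sum_i x_{ij}=1 \text{ for all } j,\ \sum_j x_{ij}=1\text{ for all } i\}$. A disk vector in $A$ is an element of $W$ of the form $\sum_{j=1}^k (i_j,i_{j+1})$ with $k\ge1$, indices $i_1,\dots,i_k\in\{1,\dots,L\}$, $i_{k+1}=i_1$, and $a_{i_1}a_{i_2}\cdots a_{i_k}=1$ in $A$; let $\mathcal D_A$ be the set of disk vectors in $A$, and define $\mathcal D_B$ analogously using the $b_i$. For $v\in V$ set $\kappa_A(v)=\sup\{\sum_s t_s : v=\sum_s t_s d_s+\sum_{i,j}x'_{ij}(i,j),\ t_s\ge0,\ d_s\in\mathcal D_A,\ x'_{ij}\ge 0\}$ (finite sums), and define $\kappa_B$ analogously with $\mathcal D_B$. *)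

From Stdlib Require Import Reals List.
Import ListNotations.
Open Scope R_scope.

Record group := Group {
  gcar :> Type;
  gmul : gcar -> gcar -> gcar;
  gone : gcar;
  ginv : gcar -> gcar;
  gmulA : forall x y z, gmul x (gmul y z) = gmul (gmul x y) z;
  gmul1l : forall x, gmul gone x = x;
  gmulVl : forall x, gmul (ginv x) x = gone
}.

Fixpoint gpow (G : group) (x : G) (n : nat) : G :=
  match n with O => gone G | S m => gmul G x (gpow G x m) end.

Inductive enat := Fin (n : nat) | Inf.

Definition enat_le (o1 o2 : enat) : Prop :=
  match o1, o2 with
  | _, Inf => True
  | Inf, Fin _ => False
  | Fin m, Fin n => (m <= n)%nat
  end.

(* 1/N with the convention 1/∞ = 0. *)
Definition einv (o : enat) : R :=
  match o with Fin n => / INR n | Inf => 0 end.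

Definition has_order (G : group) (x : G) (o : enat) : Prop :=
  match o with
  | Fin n => (0 < n)%nat /\ gpow G x n = gone G /\
             (forall m, (0 < m < n)%nat -> gpow G x m <> gone G)
  | Inf => forall m, (0 < m)%nat -> gpow G x m <> gone G
  end.

Definition sumL (n : nat) (f : nat -> R) : R :=
  fold_right Rplus 0 (map f (seq 0 n)).

(* Indices are 0..L-1 (the paper's 1..L shifted by one).
   A vector of W is a function x : nat -> nat -> R, read on i,j < L. *)
Definition inV (L : nat) (x : nat -> nat -> R) : Prop :=
  (forall i j, (i < L)%nat -> (j < L)%nat -> 0 <= x i j) /\
  (forall j, (j < L)%nat -> sumL L (fun i => x i j) = 1) /\
  (forall i, (i < L)%nat -> sumL L (fun j => x i j) = 1).

(* Cyclic consecutive pairs (i_1,i_2),...,(i_k,i_{k+1}) with i_{k+1}=i_1. *)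
Definition cyc_pairs (l : list nat) : list (nat * nat) :=
  match l with
  | [] => []
  | h :: t => combine l (t ++ [h])
  end.

(* Coefficient of (i,j) in the disk vector sum_j (i_j, i_{j+1}). *)
Definition dcoef (l : list nat) (i j : nat) : R :=
  INR (length (filter (fun p => andb (Nat.eqb (fst p) i) (Nat.eqb (snd p) j))
                      (cyc_pairs l))).

(* The word l = [i_1;...;i_k] gives a disk vector for the letters a. *)
Definition is_disk (G : group) (L : nat) (a : nat -> G) (l : list nat) : Prop :=
  l <> [] /\ (forall i, In i l -> (i < L)%nat) /\
  fold_right (gmul G) (gone G) (map a l) = gone G.

(* [kappa_val G L a x r]: r = sum_s t_s for some decomposition
   x = sum_s t_s d_s + x' with t_s >= 0, d_s disk vectors, x' >= 0.
   kappa(x) is the supremum of such r. *)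
Definition kappa_val (G : group) (L : nat) (a : nat -> G)
    (x : nat -> nat -> R) (r : R) : Prop :=
  exists (ts : list (R * list nat)) (x' : nat -> nat -> R),
    (forall p, In p ts -> 0 <= fst p /\ is_disk G L a (snd p)) /\
    (forall i j, (i < L)%nat -> (j < L)%nat -> 0 <= x' i j) /\
    (forall i j, (i < L)%nat -> (j < L)%nat ->
        x i j = fold_right Rplus 0 (map (fun p => fst p * dcoef (snd p) i j) ts)
                + x' i j) /\
    r = fold_right Rplus 0 (map fst ts).

Definition kbound (L : nat) (N : enat) (x : nat -> nat -> R) : R :=
  einv N * sumL L (fun i => sumL L (fun j => if Nat.leb j i then x i j else 0))
  + (1 - einv N) * sumL L (fun i => sumL L (fun j => if Nat.ltb i j then x i j else 0)).

(* Weight the pair (i,j) by 1/N if i >= j and by 1 - 1/N if i < j, so that the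
   right-hand side is the weighted total of v.  Every disk vector has weighted
   total at least 1: the cyclic word i_1 ... i_k has a non-increasing step; if it
   also has an increasing one, these two steps alone weigh 1/N + (1 - 1/N);
   otherwise the word is constant, so a_(i_1)^k = 1 forces k >= N and the total
   is k/N.  Hence for v = sum_s t_s d_s + x' with x' >= 0 the weighted total of
   v is at least sum_s t_s. *)

From Stdlib Require Import Reals List Lia Lra Classical.
Import ListNotations.
Open Scope R_scope.

Local Notation lsum f l := (fold_right Rplus 0 (map f l)).

Lemma fold_right_Rplus_acc (l : list R) (r : R) :
  fold_right Rplus r l = fold_right Rplus 0 l + r.
Proof. induction l as [|y l IH]; simpl; [ring | rewrite IH; ring]. Qed.

Lemma lsum_add {T} (f g : T -> R) (l : list T) :
  lsum (fun p => f p + g p) l = lsum f l + lsum g l.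
Proof. induction l as [|p l IH]; simpl; [ring | rewrite IH; ring]. Qed.

Lemma lsum_const {T} (f : T -> R) (k : R) (l : list T) :
  (forall p, In p l -> f p = k) -> lsum f l = INR (length l) * k.
Proof.
  induction l as [|p l IH]; intros Hf; [simpl; ring|].
  cbn [map fold_right length].
  rewrite S_INR, Hf, IH; [ring | intros; apply Hf | ]; simpl; auto.
Qed.

Lemma lsum_nonneg {T} (f : T -> R) (l : list T) :
  (forall p, In p l -> 0 <= f p) -> 0 <= lsum f l.
Proof.
  induction l as [|p l IH]; intros Hf; simpl; [lra|].
  assert (0 <= f p) by (apply Hf; simpl; auto).
  assert (0 <= lsum f l) by (apply IH; intros; apply Hf; simpl; auto). lra.
Qed.

Lemma lsum_ge_term {T} (f : T -> R) (l : list T) (p : T) :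
  (forall q, In q l -> 0 <= f q) -> In p l -> f p <= lsum f l.
Proof.
  induction l as [|q l IH]; intros Hf Hp; [destruct Hp|]; destruct Hp as [<- | Hp]; simpl.
  - assert (0 <= lsum f l) by (apply lsum_nonneg; intros; apply Hf; simpl; auto). lra.
  - assert (0 <= f q) by (apply Hf; simpl; auto).
    assert (f p <= lsum f l) by (apply IH; auto; intros; apply Hf; simpl; auto). lra.
Qed.

Lemma sumL_S n f : sumL (S n) f = sumL n f + f n.
Proof.
  unfold sumL. rewrite seq_S, map_app, fold_right_app; simpl.
  rewrite fold_right_Rplus_acc. ring.
Qed.

Lemma sumL_ext n f g : (forall i, (i < n)%nat -> f i = g i) -> sumL n f = sumL n g.
Proof. induction n; intros H; [reflexivity|]. rewrite !sumL_S, IHn, H; auto. Qed.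

Lemma sumL_0 n : sumL n (fun _ => 0) = 0.
Proof. induction n; [reflexivity|]. rewrite sumL_S, IHn; ring. Qed.

Lemma sumL_add n f g : sumL n (fun i => f i + g i) = sumL n f + sumL n g.
Proof. induction n; [unfold sumL; simpl; ring|]. rewrite !sumL_S, IHn; ring. Qed.

Lemma sumL_scal n r f : sumL n (fun i => r * f i) = r * sumL n f.
Proof. induction n; [unfold sumL; simpl; ring|]. rewrite !sumL_S, IHn; ring. Qed.

Lemma sumL_nonneg n f : (forall i, (i < n)%nat -> 0 <= f i) -> 0 <= sumL n f.
Proof.
  induction n; intros H; [unfold sumL; simpl; lra|]. rewrite sumL_S.
  assert (0 <= f n) by auto. assert (0 <= sumL n f) by auto. lra.
Qed.

Lemma sumL_delta n k g :
  (k < n)%nat -> sumL n (fun i => if Nat.eqb i k then g i else 0) = g k.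
Proof.
  induction n; intros Hk; [lia|]. rewrite sumL_S.
  destruct (Nat.eqb_spec n k) as [<- | Hnk].
  - rewrite (sumL_ext _ _ (fun _ => 0)), sumL_0; [ring|].
    intros i Hi. destruct (Nat.eqb_spec i n); [lia | reflexivity].
  - rewrite IHn by lia. ring.
Qed.

Definition pairing (L : nat) (c x : nat -> nat -> R) : R :=
  sumL L (fun i => sumL L (fun j => c i j * x i j)).

Lemma pairing_ext L c x y :
  (forall i j, (i < L)%nat -> (j < L)%nat -> x i j = y i j) ->
  pairing L c x = pairing L c y.
Proof.
  intros H. apply sumL_ext; intros i Hi. apply sumL_ext; intros j Hj. rewrite H; auto.
Qed.

Lemma pairing_add L c x y :
  pairing L c (fun i j => x i j + y i j) = pairing L c x + pairing L c y.
Proof.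
  unfold pairing. rewrite <- sumL_add. apply sumL_ext; intros i _.
  rewrite <- sumL_add. apply sumL_ext; intros j _. ring.
Qed.

Lemma pairing_scal L c r x :
  pairing L c (fun i j => r * x i j) = r * pairing L c x.
Proof.
  unfold pairing. rewrite <- sumL_scal. apply sumL_ext; intros i _.
  rewrite <- sumL_scal. apply sumL_ext; intros j _. ring.
Qed.

Lemma pairing_zero L c : pairing L c (fun _ _ => 0) = 0.
Proof.
  unfold pairing. rewrite (sumL_ext _ _ (fun _ => 0)); [apply sumL_0|]. intros i _.
  rewrite (sumL_ext _ _ (fun _ => 0)); [apply sumL_0|]. intros j _. ring.
Qed.

Lemma pairing_nonneg L c x :
  (forall i j, (i < L)%nat -> (j < L)%nat -> 0 <= c i j /\ 0 <= x i j) ->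
  0 <= pairing L c x.
Proof.
  intros H. apply sumL_nonneg; intros i Hi. apply sumL_nonneg; intros j Hj.
  destruct (H i j Hi Hj). apply Rmult_le_pos; auto.
Qed.

Lemma pairing_lsum {T} L c (g : T -> nat -> nat -> R) (l : list T) :
  pairing L c (fun i j => lsum (fun p => g p i j) l) = lsum (fun p => pairing L c (g p)) l.
Proof.
  induction l as [|p l IH]; simpl; [apply pairing_zero|].
  rewrite (pairing_add L c (g p) (fun i j => lsum (fun p => g p i j) l)), IH. reflexivity.
Qed.

Definition pair_count (ps : list (nat * nat)) (i j : nat) : R :=
  INR (length (filter (fun p => andb (Nat.eqb (fst p) i) (Nat.eqb (snd p) j)) ps)).

Lemma pairing_indicator L c p :
  (fst p < L)%nat -> (snd p < L)%nat ->
  pairing L c (fun i j => if andb (Nat.eqb (fst p) i) (Nat.eqb (snd p) j) then 1 else 0)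
  = c (fst p) (snd p).
Proof.
  intros Hi Hj. unfold pairing.
  rewrite (sumL_ext _ _ (fun i => if Nat.eqb i (fst p) then c i (snd p) else 0)).
  { apply (sumL_delta L (fst p) (fun i => c i (snd p))); auto. }
  intros i _. destruct (Nat.eqb_spec i (fst p)) as [-> | Hne].
  - rewrite <- (sumL_delta L (snd p) (c (fst p))) by auto.
    apply sumL_ext; intros j _. rewrite Nat.eqb_refl; simpl.
    destruct (Nat.eqb_spec (snd p) j), (Nat.eqb_spec j (snd p)); subst; try lia; ring.
  - rewrite (sumL_ext _ _ (fun _ => 0)); [apply sumL_0|]. intros j _.
    destruct (Nat.eqb_spec (fst p) i); [lia|]. simpl. ring.
Qed.

Lemma pairing_pair_count L c ps :
  (forall p, In p ps -> (fst p < L)%nat /\ (snd p < L)%nat) ->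
  pairing L c (pair_count ps) = lsum (fun p => c (fst p) (snd p)) ps.
Proof.
  induction ps as [|p ps IH]; intros Hps.
  - rewrite <- (pairing_zero L c). apply pairing_ext; reflexivity.
  - rewrite (pairing_ext L c _
      (fun i j => (if andb (Nat.eqb (fst p) i) (Nat.eqb (snd p) j) then 1 else 0)
                  + pair_count ps i j)).
    + destruct (Hps p (or_introl eq_refl)).
      rewrite pairing_add, pairing_indicator, IH by (auto; intros; apply Hps; simpl; auto).
      reflexivity.
    + intros i j _ _. unfold pair_count. cbn [filter].
      destruct (andb _ _); cbn [length]; [rewrite S_INR|]; ring.
Qed.

Lemma cyc_pairs_bounded L l :
  (forall i, In i l -> (i < L)%nat) ->
  forall p, In p (cyc_pairs l) -> (fst p < L)%nat /\ (snd p < L)%nat.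
Proof.
  intros Hl [u v] Hp. destruct l as [|h t]; [destruct Hp|]. unfold cyc_pairs in Hp; simpl.
  split; apply Hl.
  - exact (in_combine_l _ _ _ _ Hp).
  - apply in_combine_r, in_app_or in Hp. simpl. destruct Hp as [? | [<- | []]]; auto.
Qed.

Lemma length_cyc_pairs h t : length (cyc_pairs (h :: t)) = length (h :: t).
Proof. unfold cyc_pairs. rewrite length_combine, length_app; cbn [length]. lia. Qed.

Lemma combine_chain_descent t : forall x y, (y <= x)%nat ->
  exists p, In p (combine (x :: t) (t ++ [y])) /\ (snd p <= fst p)%nat.
Proof.
  induction t as [|z t IH]; intros x y Hyx.
  - exists (x, y). simpl; auto.
  - destruct (Nat.le_gt_cases z x) as [Hzx | Hxz].
    + exists (x, z). simpl; auto.
    + destruct (IH z y) as [p [Hp Hdesc]]; [lia|]. exists p. simpl; auto.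
Qed.

Lemma cyc_pairs_descent h t : exists p, In p (cyc_pairs (h :: t)) /\ (snd p <= fst p)%nat.
Proof. apply combine_chain_descent; lia. Qed.

Lemma combine_chain_nonincreasing t : forall x y,
  (forall p, In p (combine (x :: t) (t ++ [y])) -> (snd p <= fst p)%nat) ->
  (y <= x)%nat /\ forall z, In z t -> (y <= z <= x)%nat.
Proof.
  induction t as [|z t IH]; intros x y H.
  - split; [apply (H (x, y)); simpl; auto | intros z []].
  - assert (z <= x)%nat by (apply (H (x, z)); simpl; auto).
    destruct (IH z y) as [Hyz Ht]; [intros p Hp; apply H; simpl; auto|].
    split; [lia|]. intros w [<- | Hw]; [lia|]. specialize (Ht w Hw). lia.
Qed.

Lemma cyc_pairs_nonincreasing_const h t :
  (forall p, In p (cyc_pairs (h :: t)) -> (snd p <= fst p)%nat) ->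
  forall z, In z (h :: t) -> z = h.
Proof.
  intros H z [<- | Hz]; [reflexivity|].
  destruct (combine_chain_nonincreasing t h h H) as [_ Ht]. specialize (Ht z Hz). lia.
Qed.

Lemma word_prod_const (G : group) (a : nat -> G) h w :
  (forall z, In z w -> z = h) ->
  fold_right (gmul G) (gone G) (map a w) = gpow G (a h) (length w).
Proof.
  induction w as [|z w IH]; intros Hw; [reflexivity|]. simpl.
  rewrite (Hw z), IH; [reflexivity | intros; apply Hw |]; simpl; auto.
Qed.

Lemma has_order_of_gpow (G : group) (g : G) k :
  (0 < k)%nat -> gpow G g k = gone G -> exists m, (m <= k)%nat /\ has_order G g (Fin m).
Proof.
  induction k as [k IH] using (well_founded_induction Nat.lt_wf_0); intros Hk Hgk.
  destruct (classic (exists m, (0 < m < k)%nat /\ gpow G g m = gone G))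
    as [[m [Hm Hgm]] | Hmin].
  - destruct (IH m) as [m' [? ?]]; try tauto. exists m'. split; [lia | assumption].
  - exists k. split; [lia|]. repeat split; auto.
    intros m Hm Hgm. apply Hmin. eauto.
Qed.

Definition kweight (N : enat) (i j : nat) : R :=
  if Nat.leb j i then einv N else 1 - einv N.

Lemma kbound_pairing L N x : kbound L N x = pairing L (kweight N) x.
Proof.
  unfold kbound, pairing. rewrite <- !sumL_scal, <- sumL_add. apply sumL_ext; intros i _.
  rewrite <- !sumL_scal, <- sumL_add. apply sumL_ext; intros j _. unfold kweight.
  destruct (Nat.leb_spec j i), (Nat.ltb_spec i j); try lia; ring.
Qed.

Section MinimalOrder.

Variables (G : group) (L : nat) (a : nat -> G) (N : enat).
Hypothesis N_pos : forall n, N = Fin n -> (0 < n)%nat.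
Hypothesis N_le_order : forall i o, (i < L)%nat -> has_order G (a i) o -> enat_le N o.

Lemma einv_bounds : 0 <= einv N <= 1.
Proof.
  destruct N as [n|] eqn:HN; simpl; [|lra].
  assert (1 <= INR n) by (apply (le_INR 1), N_pos; auto).
  split; [left; apply Rinv_0_lt_compat; lra|].
  rewrite <- Rinv_1. apply Rinv_le_contravar; lra.
Qed.

Lemma kweight_nonneg i j : 0 <= kweight N i j.
Proof. pose proof einv_bounds. unfold kweight. destruct (Nat.leb j i); lra. Qed.

Lemma kweight_ascent_descent ps p q :
  In p ps -> (fst p < snd p)%nat -> In q ps -> (snd q <= fst q)%nat ->
  1 <= lsum (fun r => kweight N (fst r) (snd r)) ps.
Proof.
  intros Hp Hpq Hq Hqp. pose proof einv_bounds.
  set (descent r := if Nat.leb (snd r) (fst r) then einv N else 0).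
  set (ascent r := if Nat.leb (snd r) (fst r) then 0 else 1 - einv N).
  assert (Hsplit : forall r, kweight N (fst r) (snd r) = descent r + ascent r).
  { intros r. unfold kweight, descent, ascent. destruct (Nat.leb _ _); ring. }
  rewrite (map_ext _ _ Hsplit), lsum_add.
  assert (Hdq : descent q = einv N).
  { unfold descent. apply Nat.leb_le in Hqp. rewrite Hqp. reflexivity. }
  assert (Hap : ascent p = 1 - einv N).
  { unfold ascent. apply Nat.leb_gt in Hpq. rewrite Hpq. reflexivity. }
  assert (descent q <= lsum descent ps).
  { apply lsum_ge_term; auto. intros r _. unfold descent. destruct (Nat.leb _ _); lra. }
  assert (ascent p <= lsum ascent ps).
  { apply lsum_ge_term; auto. intros r _. unfold ascent. destruct (Nat.leb _ _); lra. }
  lra.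
Qed.

Lemma disk_kweight_ge1 l :
  is_disk G L a l -> 1 <= lsum (fun p => kweight N (fst p) (snd p)) (cyc_pairs l).
Proof.
  intros [Hne [Hbound Hprod]]. destruct l as [|h t]; [congruence|].
  destruct (cyc_pairs_descent h t) as [q [Hq Hqdesc]].
  destruct (classic (exists p, In p (cyc_pairs (h :: t)) /\ (fst p < snd p)%nat))
    as [[p [Hp Hpasc]] | Hno_ascent].
  { exact (kweight_ascent_descent _ p q Hp Hpasc Hq Hqdesc). }
  assert (Hdesc : forall p, In p (cyc_pairs (h :: t)) -> (snd p <= fst p)%nat).
  { intros p Hp. apply Nat.nlt_ge. intros Hlt. apply Hno_ascent. eauto. }
  rewrite (word_prod_const G a h (h :: t)) in Hprod
    by exact (cyc_pairs_nonincreasing_const h t Hdesc).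
  destruct (has_order_of_gpow G (a h) (length (h :: t))) as [m [Hmk Hm]];
    [simpl; lia | exact Hprod|].
  pose proof (N_le_order h (Fin m) (Hbound h (or_introl eq_refl)) Hm) as HNm.
  destruct N as [n|] eqn:HN; [|destruct HNm]. simpl in HNm.
  rewrite (lsum_const _ (/ INR n)), length_cyc_pairs.
  - assert (0 < INR n) by (apply lt_0_INR, N_pos; auto).
    assert (INR n <= INR (length (h :: t))) by (apply le_INR; lia).
    apply (Rmult_le_reg_r (INR n)); [lra|].
    rewrite Rmult_assoc, Rinv_l; lra.
  - intros r Hr. unfold kweight. specialize (Hdesc r Hr).
    destruct (Nat.leb_spec (snd r) (fst r)); [reflexivity | lia].
Qed.

Lemma disk_pairing_ge1 d : is_disk G L a d -> 1 <= pairing L (kweight N) (dcoef d).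
Proof.
  intros Hd. change (dcoef d) with (pair_count (cyc_pairs d)).
  rewrite pairing_pair_count by (apply cyc_pairs_bounded, Hd).
  exact (disk_kweight_ge1 d Hd).
Qed.

Lemma kappa_val_le_kbound x r : kappa_val G L a x r -> r <= kbound L N x.
Proof.
  intros [ts [x' [Hts [Hx' [Hx ->]]]]].
  rewrite kbound_pairing, (pairing_ext _ _ _ _ Hx), pairing_add, pairing_lsum.
  setoid_rewrite pairing_scal.
  assert (0 <= pairing L (kweight N) x').
  { apply pairing_nonneg. intros i j Hi Hj. split; [apply kweight_nonneg | auto]. }
  enough (lsum fst ts <= lsum (fun p => fst p * pairing L (kweight N) (dcoef (snd p))) ts)
    by lra.
  clear Hx. induction ts as [|[t d] ts IH]; simpl; [lra|].
  destruct (Hts (t, d) (or_introl eq_refl)) as [Ht Hd]; simpl in Ht, Hd.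
  pose proof (disk_pairing_ge1 d Hd).
  specialize (IH (fun p Hp => Hts p (or_intror Hp))).
  nra.
Qed.

End MinimalOrder.

Theorem mainTheorem5 (A B : group) (L : nat) (a : nat -> A) (b : nat -> B)
  (N : enat)
  (hL : (1 <= L)%nat)
  (ha : forall i, (i < L)%nat -> a i <> gone A)
  (hb : forall i, (i < L)%nat -> b i <> gone B)
  (hNmin : (exists i, (i < L)%nat /\ (has_order A (a i) N \/ has_order B (b i) N)) /\
           (forall i o, (i < L)%nat -> has_order A (a i) o -> enat_le N o) /\
           (forall i o, (i < L)%nat -> has_order B (b i) o -> enat_le N o))
  (x : nat -> nat -> R) (hx : inV L x) :
  (forall r, kappa_val A L a x r -> r <= kbound L N x) /\
  (forall r, kappa_val B L b x r -> r <= kbound L N x).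
Proof.
  destruct hNmin as [[i [_ HiN]] [HA HB]].
  assert (N_pos : forall n, N = Fin n -> (0 < n)%nat).
  { intros n ->. destruct HiN as [[? _] | [? _]]; assumption. }
  split; intros r; apply kappa_val_le_kbound; assumption.
Qed.
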